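(* Let $\mathcal{D}=\{(\mathbf{x}_i,y_i)\}_{i=1}^n$ be a training set, $f(\mathbf{x};\mathbf{w})$ a model, $\ell$ a loss, and $\mathcal{L}(\mathcal{D};\mathbf{w})=\frac{1}{n}\sum_{i=1}^n\ell(f(\mathbf{x}_i;\mathbf{w}),y_i)$. Assume $\mathcal{L}(\mathcal{D};\cdot)$ is $\beta$-smooth, i.e. $\|\nabla\mathcal{L}(\mathcal{D};\mathbf{w})-\nabla\mathcal{L}(\mathcal{D};\mathbf{v})\|\le\beta\|\mathbf{w}-\mathbf{v}\|$. Consider an algorithm $\mathcal{A}$ with full-batch gradients: for $t=0,\dots,T-1$, with $\xi_t\in\{0,1\}$ indicating whether iteration $t$ uses a SAM update, $$\mathbf{w}_{t+1}=\mathbf{w}_t-\eta\Big((1-\xi_t)\nabla\mathcal{L}(\mathcal{D};\mathbf{w}_t)+\xi_t\nabla\mathcal{L}\big(\mathcal{D};\mathbf{w}_t+\rho\nabla\mathcal{L}(\mathcal{D};\mathbf{w}_t)\big)\Big).$$ If $\rho<\frac{1}{2\beta}$ and $\eta<\frac{1}{\beta}$, then $$\min_{0\le t\le T-1}\|\nabla\mathcal{L}(\mathcal{D};\mathbf{w}_t)\|^2\le\frac{\mathcal{L}(\mathcal{D};\mathbf{w}_0)-\mathcal{L}(\mathcal{D};\mathbf{w}_T)}{T\eta\left(1-\frac{\beta\eta}{2}-\beta\rho\zeta\right)},$$ where $\zeta=\frac{1}{T}\sum_{t=0}^{T-1}\xi_t\in[0,1]$.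
   Context: $\eta>0$ is the stepsize and $\rho>0$ the SAM perturbation radius; the rule choosing $\xi_t$ is arbitrary. *)

From HB Require Import structures.
From mathcomp Require Import all_boot all_order all_algebra.
From mathcomp Require Import all_classical all_reals all_analysis.
Set Implicit Arguments. Unset Strict Implicit. Unset Printing Implicit Defensive.
Import Order.TTheory GRing.Theory Num.Theory.
Import numFieldNormedType.Exports.
Local Open Scope ring_scope.

(* Euclidean inner product and Euclidean norm on R^d (the library's norm on
   matrices is the max norm, so we define the Euclidean one explicitly). *)
Definition dotv {R : realType} {d : nat} (u v : 'rV[R]_d) : R :=
  \sum_(i < d) u ord0 i * v ord0 i.
Definition enorm {R : realType} {d : nat} (u : 'rV[R]_d) : R :=
  Num.sqrt (dotv u u).

Definition emp_loss {R : realType} {d n : nat} {X Y O : Type}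
  (f : X -> 'rV[R]_d -> O) (ell : O -> Y -> R) (D : 'I_n -> X * Y)
  (w : 'rV[R]_d) : R :=
  n%:R^-1 * \sum_(i < n) ell (f (D i).1 w) (D i).2.

Definition is_gradient {R : realType} {d : nat}
  (L : 'rV[R]_d -> R) (g : 'rV[R]_d -> 'rV[R]_d) : Prop :=
  forall w, differentiable L w /\ forall v, 'd L w v = dotv (g w) v.

Definition smooth {R : realType} {d : nat} (beta : R)
  (g : 'rV[R]_d -> 'rV[R]_d) : Prop :=
  forall w v, enorm (g w - g v) <= beta * enorm (w - v).

From HB Require Import structures.
From mathcomp Require Import all_boot all_order all_algebra.
From mathcomp Require Import all_classical all_reals all_analysis.
From mathcomp Require Import ring lra.
Import Order.TTheory GRing.Theory Num.Theory.
Import numFieldNormedType.Exports.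
Local Open Scope ring_scope.

(* By beta-smoothness, L (w + u) <= L w + <grad L w, u> + beta/2 |u|^2.  A SAM
   step follows the gradient taken at distance rho |grad L w| from w, so its
   direction differs from grad L w by at most beta rho |grad L w|; in the
   descent inequality this costs at most eta beta rho |grad L w|^2 compared
   with a gradient step.  Each iteration therefore lowers the loss by
   c_t |grad L w_t|^2 with c_t = eta (1 - beta eta/2 - beta rho xi_t) > 0, and
   telescoping, then bounding each |grad L w_t|^2 below by the minimum, gives
   the claim since sum_t c_t = T eta (1 - beta eta/2 - beta rho zeta). *)

Section EuclideanGeometry.
Context {R : realType} {d : nat}.
Implicit Types (a : R) (u v z : 'rV[R]_d).

Lemma dotvC u v : dotv u v = dotv v u.
Proof. by apply: eq_bigr => i _; rewrite mulrC. Qed.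

Lemma dotvDl u v z : dotv (u + v) z = dotv u z + dotv v z.
Proof. by rewrite /dotv -big_split; apply: eq_bigr => i _; rewrite mxE mulrDl. Qed.

Lemma dotvZl a u v : dotv (a *: u) v = a * dotv u v.
Proof. by rewrite /dotv mulr_sumr; apply: eq_bigr => i _; rewrite mxE mulrA. Qed.

Lemma dotvBl u v z : dotv (u - v) z = dotv u z - dotv v z.
Proof. by rewrite dotvDl -scaleN1r dotvZl mulN1r. Qed.

Lemma dotvDr u v z : dotv u (v + z) = dotv u v + dotv u z.
Proof. by rewrite dotvC dotvDl !(dotvC u). Qed.

Lemma dotvZr a u v : dotv u (a *: v) = a * dotv u v.
Proof. by rewrite dotvC dotvZl dotvC. Qed.

Lemma dotv0l v : dotv 0 v = 0.
Proof. by rewrite -(scale0r 0) dotvZl mul0r. Qed.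

Lemma enorm0 : enorm (0 : 'rV[R]_d) = 0.
Proof. by rewrite /enorm dotv0l sqrtr0. Qed.

Lemma dotvv_ge0 u : 0 <= dotv u u.
Proof. by apply: sumr_ge0 => i _; rewrite -expr2 sqr_ge0. Qed.

Lemma enorm_ge0 u : 0 <= enorm u.
Proof. exact: sqrtr_ge0. Qed.

Lemma enorm_sqr u : enorm u ^+ 2 = dotv u u.
Proof. by rewrite sqr_sqrtr // dotvv_ge0. Qed.

Lemma enorm_eq0 u : (enorm u == 0) = (u == 0).
Proof.
apply/idP/eqP => [|->]; last by rewrite enorm0.
rewrite sqrtr_eq0 => uu_le0; apply/rowP => i; rewrite mxE; apply/eqP.
rewrite -sqrf_eq0 expr2; apply/eqP.
have uu0 : dotv u u = 0 by apply/eqP; rewrite eq_le uu_le0 dotvv_ge0.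
by apply: (psumr_eq0P _ uu0) => // j _; rewrite -expr2 sqr_ge0.
Qed.

Lemma enormZ a u : enorm (a *: u) = `|a| * enorm u.
Proof. by rewrite /enorm dotvZl dotvZr mulrA -expr2 sqrtrM ?sqr_ge0 // sqrtr_sqr. Qed.

Lemma enormD_sqr u v :
  enorm (u + v) ^+ 2 = enorm u ^+ 2 + 2 * dotv u v + enorm v ^+ 2.
Proof. by rewrite !enorm_sqr dotvDl !dotvDr (dotvC v u); ring. Qed.

Lemma dotv_le_enorm u v : dotv u v <= enorm u * enorm v.
Proof.
have [/eqP|u_neq0] := eqVneq (enorm u) 0.
  by rewrite enorm_eq0 => /eqP->; rewrite dotv0l enorm0 mul0r.
have [/eqP|v_neq0] := eqVneq (enorm v) 0.
  by rewrite enorm_eq0 => /eqP->; rewrite dotvC dotv0l enorm0 mulr0.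
have uv_gt0 : 0 < enorm u * enorm v.
  by rewrite mulr_gt0 // lt0r ?u_neq0 ?v_neq0 enorm_ge0.
(* |v| u - |u| v has squared norm 2 |u| |v| (|u| |v| - <u, v>). *)
have := sqr_ge0 (enorm (enorm v *: u - enorm u *: v)).
rewrite enormD_sqr -scaleN1r scalerA dotvZl dotvZr !enormZ.
rewrite mulN1r normrN !ger0_norm ?enorm_ge0 // => sqr_diff_ge0.
nra.
Qed.
End EuclideanGeometry.

Lemma ler_quadratic_of_derive {R : realType} (phi phi' : R -> R) (c : R) :
  (forall s : R, is_derive s 1 phi (phi' s)) ->
  (forall s, 0 < s < 1 -> phi' s <= phi' 0 + c * s) ->
  phi 1 <= phi 0 + phi' 0 + c / 2.
Proof.
move=> dphi phi'_le.
pose psi s := phi s - phi' 0 * s - c / 2 * s ^+ 2.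
have dpsi (s : R) : is_derive s 1 psi (phi' s - phi' 0 - c * s).
  apply: (@is_derive_eq _ _ _ psi _ _ _ _
    (is_deriveB (is_deriveB (dphi s) (is_deriveZ (phi' 0) (is_derive_id s 1)))
      (is_deriveZ (c / 2) (is_deriveX 2 (is_derive_id s 1))))).
  by rewrite /GRing.scale /= expr1; field.
have psi_nincr : psi 1 <= psi 0.
  apply: (ler0_derive1_le_cc (a := 0) (b := 1)).
  - by move=> x _; case: (dpsi x).
  - move=> x; rewrite in_itv /= => x01.
    by rewrite derive1E derive_val subr_le0 lerBlDl phi'_le.
  - apply: continuous_subspaceT => x; apply: differentiable_continuous.
    by apply/derivable1_diffP; case: (dpsi x).
  - by rewrite in_itv /= lexx ler01.
  - by rewrite in_itv /= lexx ler01.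
  - exact: ler01.
move: psi_nincr; rewrite /psi expr1n expr0n /=; lra.
Qed.

(* The scalar core of an inexact gradient step, with N = |grad L w|,
   E = |h - grad L w| and P = <grad L w, h - grad L w>. *)
Lemma inexact_step_ineq {R : realFieldType} (beta eta r N E P : R) :
  0 <= beta -> 0 <= eta -> beta * eta <= 1 -> beta * r <= 2 ->
  0 <= N -> 0 <= E -> - (N * E) <= P -> E <= beta * r * N ->
  - eta * (N ^+ 2 + P) + beta / 2 * (eta ^+ 2 * (N ^+ 2 + 2 * P + E ^+ 2)) <=
  - (eta * (1 - beta * eta / 2 - beta * r) * N ^+ 2).
Proof.
move=> beta_ge0 eta_ge0 beta_eta_le1 beta_r_le2 N_ge0 E_ge0 P_ge E_le.
have qN_ge0 : 0 <= beta * r * N ^+ 2.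
  by rewrite expr2 mulrA mulr_ge0 // (le_trans E_ge0).
have P_le : - P <= beta * r * N ^+ 2 by nra.
have E2_le : E ^+ 2 <= (beta * r) ^+ 2 * N ^+ 2 by nra.
have a_ge0 : 0 <= beta * eta by rewrite mulr_ge0.
rewrite -subr_ge0.
have -> : - (eta * (1 - beta * eta / 2 - beta * r) * N ^+ 2) -
  (- eta * (N ^+ 2 + P) + beta / 2 * (eta ^+ 2 * (N ^+ 2 + 2 * P + E ^+ 2))) =
  eta * (beta * r * N ^+ 2 + (1 - beta * eta) * P - beta * eta / 2 * E ^+ 2).
  by field.
apply: mulr_ge0 => //.
have P_scaled : (1 - beta * eta) * - P <= (1 - beta * eta) * (beta * r * N ^+ 2).
  by rewrite ler_wpM2l // subr_ge0.
have E2_scaled : beta * eta * E ^+ 2 <= beta * eta * ((beta * r) ^+ 2 * N ^+ 2).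
  by rewrite ler_wpM2l.
have qN2_le : (beta * r) ^+ 2 * N ^+ 2 <= 2 * (beta * r * N ^+ 2) by nra.
nra.
Qed.

Section SmoothDescent.
Context {R : realType} {d : nat} (L : 'rV[R]_d -> R) (g : 'rV[R]_d -> 'rV[R]_d).
Hypothesis gradL : is_gradient L g.

Lemma is_derive_along_line (w u : 'rV[R]_d) (s : R) :
  is_derive s 1 (L \o (fun t : R => t *: u + w)) (dotv (g (s *: u + w)) u).
Proof.
have [dL dLE] := gradL (s *: u + w).
have line_diff : is_diff s (fun t : R => t *: u + w) (fun t : R => t *: u).
  by rewrite -[X in is_diff _ _ X]addr0; apply: is_diffD.
have [dline dlineE] := line_diff.
have dcomp : differentiable (L \o (fun t : R => t *: u + w)) s.
  exact: differentiable_comp.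
apply: DeriveDef; first exact: diff_derivable.
by rewrite deriveE // diff_comp // dlineE /= dLE scale1r.
Qed.

Variable beta : R.
Hypothesis smooth_g : smooth beta g.

Lemma descent_lemma (w u : 'rV[R]_d) :
  L (w + u) <= L w + dotv (g w) u + beta / 2 * enorm u ^+ 2.
Proof.
have := ler_quadratic_of_derive _ _ (beta * enorm u ^+ 2) (is_derive_along_line w u).
rewrite /= scale1r scale0r add0r addrC mulrAC; apply.
move=> s /andP[s_gt0 _].
rewrite -lerBlDl -dotvBl (le_trans (dotv_le_enorm _ _)) //.
have -> : beta * enorm u ^+ 2 * s = beta * enorm (s *: u + w - w) * enorm u.
  by rewrite addrK enormZ gtr0_norm //; ring.
by rewrite ler_wpM2r ?enorm_ge0.
Qed.

Lemma inexact_gradient_step (w h : 'rV[R]_d) (eta r : R) :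
  0 <= beta -> 0 <= eta -> beta * eta <= 1 -> beta * r <= 2 ->
  enorm (h - g w) <= beta * r * enorm (g w) ->
  L (w - eta *: h) <=
  L w - eta * (1 - beta * eta / 2 - beta * r) * enorm (g w) ^+ 2.
Proof.
move=> beta_ge0 eta_ge0 beta_eta_le1 beta_r_le2 err_le.
have := descent_lemma w (- (eta *: h)).
rewrite -scaleNr dotvZr enormZ normrN ger0_norm // => descent.
apply: (le_trans descent); rewrite -addrA lerD2l.
have -> : h = g w + (h - g w) by rewrite addrC subrK.
move: (h - g w) err_le => e err_le.
have Ge_ge : - (enorm (g w) * enorm e) <= dotv (g w) e.
  have := dotv_le_enorm (g w) (- e).
  by rewrite -scaleN1r dotvZr enormZ normrN normr1 mul1r mulN1r lerNl.
rewrite dotvDr exprMn enormD_sqr -enorm_sqr.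
exact: inexact_step_ineq (enorm_ge0 _) (enorm_ge0 _) Ge_ge err_le.
Qed.

(* A SAM step is an inexact gradient step with r = rho, a gradient step one
   with r = 0. *)
Lemma gd_or_sam_step (w : 'rV[R]_d) (eta rho : R) (b : bool) :
  0 <= beta -> 0 <= eta -> 0 <= rho -> beta * eta <= 1 -> beta * rho <= 2 ->
  L (w - eta *: ((1 - b%:R) *: g w + b%:R *: g (w + rho *: g w))) <=
  L w - eta * (1 - beta * eta / 2 - beta * rho * b%:R) * enorm (g w) ^+ 2.
Proof.
move=> beta_ge0 eta_ge0 rho_ge0 beta_eta_le1 beta_rho_le2.
rewrite -[beta * rho * _]mulrA; apply: inexact_gradient_step; rewrite // ?mulrA.
  by case: b; rewrite ?mulr1 ?mulr0.
case: b; rewrite /= ?subrr ?subr0 ?scale0r ?scale1r ?add0r ?addr0 ?mulr1 ?mulr0.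
  by apply: le_trans (smooth_g _ _) _; rewrite addrC addKr enormZ ger0_norm ?mulrA.
by rewrite subrr enorm0 mul0r.
Qed.

End SmoothDescent.

Lemma bigmin_mul_sum_le {R : realDomainType} (T : nat) (x0 : R) (a c : nat -> R) :
  (forall t, 0 <= c t) ->
  \big[Num.min/x0]_(t < T) a t * \sum_(t < T) c t <= \sum_(t < T) c t * a t.
Proof.
move=> c_ge0; rewrite mulr_sumr; apply: ler_sum => t _.
by rewrite mulrC ler_wpM2l // bigmin_le.
Qed.

Lemma sum_decrease_le {R : realDomainType} (F decr : nat -> R) (k : nat) :
  (forall t, F t.+1 <= F t - decr t) -> \sum_(t < k) decr t <= F 0%N - F k.
Proof.
move=> F_decr; elim: k => [|k IHk]; first by rewrite big_ord0 subrr.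
by rewrite big_ord_recr /=; have := F_decr k; lra.
Qed.

Theorem theorem2 (R : realType) (d n : nat) (X Y O : Type)
  (f : X -> 'rV[R]_d -> O) (ell : O -> Y -> R) (D : 'I_n -> X * Y)
  (g : 'rV[R]_d -> 'rV[R]_d) (beta eta rho : R) (T : nat)
  (xi : nat -> bool) (w : nat -> 'rV[R]_d) :
  is_gradient (emp_loss f ell D) g ->
  0 < beta -> smooth beta g ->
  0 < eta -> 0 < rho ->
  rho < (2 * beta)^-1 -> eta < beta^-1 ->
  (forall t, w t.+1 = w t - eta *:
     ((1 - (xi t)%:R) *: g (w t) + (xi t)%:R *: g (w t + rho *: g (w t)))) ->
  (0 < T)%N ->
  let zeta := T%:R^-1 * \sum_(t < T) (xi t)%:R in
  \big[Num.min/ enorm (g (w 0%N)) ^+ 2]_(t < T) (enorm (g (w t)) ^+ 2)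
    <= (emp_loss f ell D (w 0%N) - emp_loss f ell D (w T)) /
       (T%:R * eta * (1 - beta * eta / 2 - beta * rho * zeta)).
Proof.
move=> gradL beta_gt0 smooth_g eta_gt0 rho_gt0 rho_lt eta_lt w_step T_gt0.
cbv zeta; set zeta := T%:R^-1 * _.
have beta_rho_lt : beta * rho < 2^-1.
  by rewrite -ltr_pdivlMl // -invfM mulrC.
have beta_eta_lt : beta * eta < 1 by rewrite -ltr_pdivlMl // mulr1.
pose c t := eta * (1 - beta * eta / 2 - beta * rho * (xi t)%:R).
have c_gt0 t : 0 < c t by apply: mulr_gt0 => //; case: (xi t) => /=; lra.
have descent t : emp_loss f ell D (w t.+1) <=
    emp_loss f ell D (w t) - c t * enorm (g (w t)) ^+ 2.
  by rewrite w_step; apply: gd_or_sam_step; rewrite ?ltW //; lra.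
have denomE :
    T%:R * eta * (1 - beta * eta / 2 - beta * rho * zeta) = \sum_(t < T) c t.
  rewrite -mulr_sumr !sumrB !sumr_const card_ord -mulr_sumr /zeta.
  by field; rewrite pnatr_eq0 -lt0n.
have denom_gt0 : 0 < \sum_(t < T) c t.
  case: T T_gt0 {denomE zeta} => // T' _; rewrite big_ord_recl.
  by apply: ltr_wpDr => //; apply: sumr_ge0 => t _; apply: ltW.
rewrite denomE ler_pdivlMr //.
apply: le_trans (bigmin_mul_sum_le _ _ (fun t => enorm (g (w t)) ^+ 2) _
  (fun t => ltW (c_gt0 t))) _.
exact: (sum_decrease_le (fun t => emp_loss f ell D (w t)) _ _ descent).
Qed.
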